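(* Let $C\in\mathbb{R}^{n\times n}$ be symmetric, $\rho>0$, and let $(\tilde\sigma^k,\sigma^k,y^k)$ be generated by the ADMM-BM algorithm described in the context, with Assumption A holding. Then for every iteration $k$, $$L_\rho(\tilde\sigma^k,\sigma^k,y^k)-L_\rho(\tilde\sigma^{k+1},\sigma^{k+1},y^{k+1})\ \ge\ \Big(\frac{\rho\min_{i\in[n]}\|\gamma_i^k\|}{2}-\frac{\|C\|^2}{\rho}\Big)\|\tilde\sigma^{k+1}-\tilde\sigma^k\|_F^2+\frac\rho2\|\sigma^{k+1}-\sigma^k\|_F^2.$$
   Context: $\langle A,B\rangle=\mathrm{Tr}(A^\top B)$, $\|\cdot\|_F$ Frobenius norm, $\|C\|$ spectral norm. For $\sigma\in\mathbb{R}^{n\times r}$, $\sigma_i$ is its $i$-th row; $\mathcal{M}=\{\sigma\in\mathbb{R}^{n\times r}:\|\sigma_i\|=1\ \forall i\}$. ADMM-BM with parameter $\rho$: choose $\tilde\sigma^0\in\mathcal{M}$, $\sigma^0=\tilde\sigma^0$, $y^0=C\tilde\sigma^0$. For $k=0,1,\dots$: $\gamma^k=\sigma^k-\frac1\rho(y^k+C\sigma^k)$ with rows $\gamma_i^k$; $\tilde\sigma^{k+1}_i=\gamma_i^k/\|\gamma_i^k\|$; $\sigma^{k+1}=\tilde\sigma^{k+1}+\frac1\rho(y^k-C\tilde\sigma^{k+1})$; $y^{k+1}=y^k+\rho(\tilde\sigma^{k+1}-\sigma^{k+1})$. Assumption A: $\gamma_i^k\neq0$ for all $i,k$. $L_\rho(\tilde\sigma,\sigma,y)=\langle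 C,\tilde\sigma\sigma^\top\rangle+\langle y,\tilde\sigma-\sigma\rangle+\frac\rho2\|\tilde\sigma-\sigma\|_F^2+\sum_i\mathcal{I}_{\{\|u\|=1\}}(\tilde\sigma_i)$, $\mathcal{I}_S$ the indicator function of $S$. *)

From HB Require Import structures.
From mathcomp Require Import all_boot all_order all_algebra.
From mathcomp Require Import boolp classical_sets reals constructive_ereal.
Set Implicit Arguments. Unset Strict Implicit. Unset Printing Implicit Defensive.
Import Order.TTheory GRing.Theory Num.Theory.
Local Open Scope ring_scope.
Local Open Scope classical_set_scope.

Section ADMMBM.
Variable R : realType.

Definition frob_inner (m p : nat) (A B : 'M[R]_(m, p)) : R := \tr (A^T *m B).
Definition frob_norm2 (m p : nat) (A : 'M[R]_(m, p)) : R := frob_inner A A.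

Definition rownorm (m p : nat) (A : 'M[R]_(m, p)) (i : 'I_m) : R :=
  Num.sqrt (\sum_(j < p) A i j ^+ 2).

Definition vnorm (m : nat) (x : 'cV[R]_m) : R :=
  Num.sqrt (\sum_(i < m) x i ord0 ^+ 2).

Definition spec_norm (m : nat) (C : 'M[R]_m) : R :=
  sup [set vnorm (C *m x) | x in [set x : 'cV[R]_m | vnorm x <= 1]].

Definition min_rownorm (m p : nat) (A : 'M[R]_(m, p)) : R :=
  inf [set rownorm A i | i in [set: 'I_m]].

Definition inM (m p : nat) (s : 'M[R]_(m, p)) : Prop :=
  forall i, rownorm s i = 1.

Definition rownormalize (m p : nat) (g : 'M[R]_(m, p)) : 'M[R]_(m, p) :=
  \matrix_(i, j) (g i j / rownorm g i).

Variables (n r : nat) (C : 'M[R]_n) (rho : R).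

Definition gammaOf (s y : 'M[R]_(n, r)) : 'M[R]_(n, r) :=
  s - rho^-1 *: (y + C *m s).

Definition admm_step (st : 'M[R]_(n, r) * 'M[R]_(n, r) * 'M[R]_(n, r)) :=
  let: (_, s, y) := st in
  let t' := rownormalize (gammaOf s y) in
  let s' := t' + rho^-1 *: (y - C *m t') in
  let y' := y + rho *: (t' - s') in
  (t', s', y').

Fixpoint admm_iter (t0 : 'M[R]_(n, r)) (k : nat) :=
  match k with
  | 0 => (t0, t0, C *m t0)
  | k'.+1 => admm_step (admm_iter t0 k')
  end.

Definition tsig t0 k := (admm_iter t0 k).1.1.
Definition sig t0 k := (admm_iter t0 k).1.2.
Definition yv t0 k := (admm_iter t0 k).2.
Definition gam t0 k := gammaOf (sig t0 k) (yv t0 k).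

Definition Lrho (t s y : 'M[R]_(n, r)) : \bar R :=
  ((frob_inner C (t *m s^T) + frob_inner y (t - s)
    + rho / 2 * frob_norm2 (t - s))%:E
   + (if `[< inM t >] then 0%E else +oo%E))%E.

End ADMMBM.

From HB Require Import structures.
From mathcomp Require Import all_boot all_order all_algebra.
From mathcomp Require Import boolp classical_sets reals constructive_ereal.
From mathcomp Require Import ring lra.
Import Order.TTheory GRing.Theory Num.Theory.
Local Open Scope ring_scope.
Set Implicit Arguments. Unset Strict Implicit. Unset Printing Implicit Defensive.

(* Along the iteration the multiplier stays y^k = C sigma~^k, and the decrease
   of L_rho splits over the three block updates.  The sigma~-update keeps
   ||sigma~||_F^2 = n, so it gains exactly rho <gamma^k, sigma~^{k+1} - sigma~^k>;
   as sigma~^{k+1}_i is gamma^k_i normalised and sigma~^k_i is a unit vector,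
   <gamma^k_i, sigma~^{k+1}_i - sigma~^k_i>
     = ||gamma^k_i|| / 2 * ||sigma~^{k+1}_i - sigma~^k_i||^2.
   The sigma-update minimises a quadratic with Hessian rho I, hence gains
   rho/2 ||sigma^{k+1} - sigma^k||^2.  The dual update loses
   ||y^{k+1} - y^k||^2 / rho = ||C (sigma~^{k+1} - sigma~^k)||^2 / rho,
   which the spectral norm bounds by ||C||^2 / rho ||sigma~^{k+1} - sigma~^k||^2. *)

Section Frobenius.
Variable R : realType.
Implicit Types (m p : nat) (a : R).

Lemma frob_innerE m p (A B : 'M[R]_(m, p)) :
  frob_inner A B = \sum_i \sum_j A i j * B i j.
Proof.
rewrite /frob_inner /mxtrace exchange_big; apply: eq_bigr => j _.
by rewrite mxE; apply: eq_bigr => i _; rewrite mxE.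
Qed.

Lemma frob_innerC m p (A B : 'M[R]_(m, p)) : frob_inner A B = frob_inner B A.
Proof. by rewrite /frob_inner -mxtrace_tr trmx_mul trmxK. Qed.

Lemma frob_innerDr m p (A B D : 'M[R]_(m, p)) :
  frob_inner A (B + D) = frob_inner A B + frob_inner A D.
Proof. by rewrite /frob_inner mulmxDr mxtraceD. Qed.

Lemma frob_innerZr m p a (A B : 'M[R]_(m, p)) :
  frob_inner A (a *: B) = a * frob_inner A B.
Proof. by rewrite /frob_inner -scalemxAr mxtraceZ. Qed.

Lemma frob_innerNr m p (A B : 'M[R]_(m, p)) :
  frob_inner A (- B) = - frob_inner A B.
Proof. by rewrite -scaleN1r frob_innerZr mulN1r. Qed.

Lemma frob_innerBr m p (A B D : 'M[R]_(m, p)) :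
  frob_inner A (B - D) = frob_inner A B - frob_inner A D.
Proof. by rewrite frob_innerDr frob_innerNr. Qed.

Lemma frob_innerDl m p (A B D : 'M[R]_(m, p)) :
  frob_inner (A + B) D = frob_inner A D + frob_inner B D.
Proof. by rewrite frob_innerC frob_innerDr !(frob_innerC D). Qed.

Lemma frob_innerZl m p a (A B : 'M[R]_(m, p)) :
  frob_inner (a *: A) B = a * frob_inner A B.
Proof. by rewrite frob_innerC frob_innerZr frob_innerC. Qed.

Lemma frob_innerBl m p (A B D : 'M[R]_(m, p)) :
  frob_inner (A - B) D = frob_inner A D - frob_inner B D.
Proof. by rewrite frob_innerC frob_innerBr !(frob_innerC D). Qed.

Lemma frob_inner_mul_trmx k m p (C : 'M[R]_(m, k)) (A : 'M[R]_(m, p))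
    (B : 'M[R]_(k, p)) :
  frob_inner C (A *m B^T) = frob_inner (C *m B) A.
Proof. by rewrite /frob_inner trmx_mul mulmxA mxtrace_mulC mulmxA. Qed.

Lemma frob_inner_mulmxl k m p (C : 'M[R]_(m, k)) (A : 'M[R]_(k, p))
    (B : 'M[R]_(m, p)) :
  frob_inner (C *m A) B = frob_inner A (C^T *m B).
Proof. by rewrite /frob_inner trmx_mul mulmxA. Qed.

Lemma frob_norm2B m p (A B : 'M[R]_(m, p)) :
  frob_norm2 (A - B) = frob_norm2 A - 2 * frob_inner A B + frob_norm2 B.
Proof. rewrite /frob_norm2 frob_innerBl !frob_innerBr (frob_innerC B A); ring. Qed.

Lemma frob_norm2_subC m p (A B : 'M[R]_(m, p)) :
  frob_norm2 (A - B) = frob_norm2 (B - A).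
Proof. by rewrite !frob_norm2B frob_innerC; ring. Qed.

Lemma frob_norm2Z m p a (A : 'M[R]_(m, p)) :
  frob_norm2 (a *: A) = a ^+ 2 * frob_norm2 A.
Proof. by rewrite /frob_norm2 frob_innerZl frob_innerZr mulrA -expr2. Qed.

Lemma quadratic_gap_at_minimizer m p rho (g b x x' : 'M[R]_(m, p)) :
  g = rho *: (b - x') ->
  (frob_inner g x + rho / 2 * frob_norm2 (b - x))
  - (frob_inner g x' + rho / 2 * frob_norm2 (b - x'))
  = rho / 2 * frob_norm2 (x - x').
Proof.
move=> ->; rewrite !frob_norm2B !frob_innerZl !frob_innerBl (frob_innerC x' x).
by field.
Qed.

Lemma quadratic_gap_equal_norms m p rho (g b x x' : 'M[R]_(m, p)) :
  frob_norm2 x = frob_norm2 x' ->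
  (frob_inner g x + rho / 2 * frob_norm2 (x - b))
  - (frob_inner g x' + rho / 2 * frob_norm2 (x' - b))
  = frob_inner (rho *: b - g) (x' - x).
Proof.
move=> eq_norm; rewrite !frob_norm2B eq_norm frob_innerBl frob_innerZl !frob_innerBr.
by rewrite !(frob_innerC b); field.
Qed.

End Frobenius.

Section RowNorms.
Variable R : realType.
Implicit Types (m p : nat).

Lemma rownorm_ge0 m p (A : 'M[R]_(m, p)) i : 0 <= rownorm A i.
Proof. exact: sqrtr_ge0. Qed.

Lemma rownorm_sqr m p (A : 'M[R]_(m, p)) i :
  rownorm A i ^+ 2 = \sum_j A i j ^+ 2.
Proof. by rewrite sqr_sqrtr // sumr_ge0 // => j _; rewrite sqr_ge0. Qed.

Lemma frob_norm2_rows m p (A : 'M[R]_(m, p)) :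
  frob_norm2 A = \sum_i rownorm A i ^+ 2.
Proof.
rewrite /frob_norm2 frob_innerE; apply: eq_bigr => i _.
by rewrite rownorm_sqr; apply: eq_bigr => j _; rewrite expr2.
Qed.

Lemma frob_norm2_inM m p (A : 'M[R]_(m, p)) : inM A -> frob_norm2 A = m%:R.
Proof.
move=> A_inM; rewrite frob_norm2_rows (eq_bigr (fun=> 1)) => [|i _].
  by rewrite sumr_const card_ord.
by rewrite A_inM expr1n.
Qed.

Lemma rownorm_rownormalize m p (g : 'M[R]_(m, p)) i :
  rownorm g i != 0 -> rownorm (rownormalize g) i = 1.
Proof.
move=> gi_neq0; apply/eqP; rewrite -(eqrXn2 (n := 2)) ?rownorm_ge0 // expr1n.
rewrite rownorm_sqr (eq_bigr (fun j => g i j ^+ 2 / rownorm g i ^+ 2)).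
  by rewrite -mulr_suml -rownorm_sqr divff // expf_neq0.
by move=> j _; rewrite mxE expr_div_n.
Qed.

Lemma inM_rownormalize m p (g : 'M[R]_(m, p)) :
  (forall i, rownorm g i != 0) -> inM (rownormalize g).
Proof. by move=> g_neq0 i; rewrite rownorm_rownormalize. Qed.

Lemma row_inner_rownormalize m p (g t : 'M[R]_(m, p)) i :
  rownorm g i != 0 -> rownorm t i = 1 ->
  \sum_j g i j * (rownormalize g - t) i j
  = rownorm g i / 2 * \sum_j (rownormalize g - t) i j * (rownormalize g - t) i j.
Proof.
move=> gi_neq0 ti1; set nu := rownorm g i in gi_neq0 *.
have sum_gg : \sum_j g i j * g i j = nu ^+ 2.
  by rewrite rownorm_sqr; apply: eq_bigr => j _; rewrite expr2.
have sum_tt : \sum_j t i j * t i j = 1.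
  by rewrite -(expr1n _ 2) -ti1 rownorm_sqr; apply: eq_bigr => j _; rewrite expr2.
have -> : \sum_j g i j * (rownormalize g - t) i j
          = nu^-1 * \sum_j g i j * g i j - \sum_j g i j * t i j.
  rewrite mulr_sumr -sumrB; apply: eq_bigr => j _.
  by rewrite !mxE -/nu; ring.
have -> : \sum_j (rownormalize g - t) i j * (rownormalize g - t) i j
          = nu^-1 ^+ 2 * \sum_j g i j * g i j
            - 2 * nu^-1 * \sum_j g i j * t i j + \sum_j t i j * t i j.
  rewrite !mulr_sumr -sumrB -big_split /=; apply: eq_bigr => j _.
  by rewrite !mxE -/nu; ring.
rewrite sum_gg sum_tt; clearbody nu.
by field.
Qed.

Lemma frob_inner_rownormalize_ge m p (g t : 'M[R]_(m, p)) (mu : R) :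
  inM t -> (forall i, rownorm g i != 0) -> (forall i, mu <= rownorm g i) ->
  mu / 2 * frob_norm2 (rownormalize g - t) <= frob_inner g (rownormalize g - t).
Proof.
move=> t_inM g_neq0 mu_le; rewrite /frob_norm2 !frob_innerE mulr_sumr.
apply: ler_sum => i _; rewrite row_inner_rownormalize //.
apply: ler_wpM2r; first by rewrite sumr_ge0 // => j _; rewrite -expr2 sqr_ge0.
by have := mu_le i; lra.
Qed.

Lemma min_rownorm_le m p (g : 'M[R]_(m, p)) i : min_rownorm g <= rownorm g i.
Proof.
apply: ge_inf; last by exists i.
by exists 0 => _ [j _ <-]; exact: rownorm_ge0.
Qed.

End RowNorms.

Section SpectralNorm.
Local Open Scope classical_set_scope.
Variable R : realType.
Implicit Types (m p : nat).

Lemma vnorm_ge0 m (x : 'cV[R]_m) : 0 <= vnorm x.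
Proof. exact: sqrtr_ge0. Qed.

Lemma vnorm_sqr m (x : 'cV[R]_m) : vnorm x ^+ 2 = \sum_i x i ord0 ^+ 2.
Proof. by rewrite sqr_sqrtr // sumr_ge0 // => i _; rewrite sqr_ge0. Qed.

Lemma vnormZ m (a : R) (x : 'cV[R]_m) : vnorm (a *: x) = `|a| * vnorm x.
Proof.
rewrite /vnorm (eq_bigr (fun i => a ^+ 2 * x i ord0 ^+ 2)) => [|i _].
  by rewrite -mulr_sumr sqrtrM ?sqr_ge0 // sqrtr_sqr.
by rewrite mxE exprMn.
Qed.

Lemma vnorm_eq0 m (x : 'cV[R]_m) : vnorm x = 0 -> x = 0.
Proof.
move=> /eqP; rewrite sqrtr_eq0 => sum_le0; apply/matrixP => i j.
rewrite (ord1 j) mxE; apply/eqP; rewrite -sqrf_eq0 eq_le sqr_ge0 andbT.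
by apply: le_trans sum_le0; rewrite (bigD1 i) //= lerDl sumr_ge0 // => k _; rewrite sqr_ge0.
Qed.

Lemma vnorm_le m (x y : 'cV[R]_m) :
  (forall i, `|x i ord0| <= `|y i ord0|) -> vnorm x <= vnorm y.
Proof.
move=> le_xy; rewrite ler_sqrt ?sumr_ge0 // => [|i _]; last exact: sqr_ge0.
apply: ler_sum => i _.
rewrite -[x i ord0 ^+ 2]real_normK ?num_real // -[y i ord0 ^+ 2]real_normK ?num_real //.
by rewrite lerXn2r ?nnegrE ?normr_ge0.
Qed.

Lemma abs_entry_le_vnorm m (x : 'cV[R]_m) i : `|x i ord0| <= vnorm x.
Proof.
rewrite -sqrtr_sqr ler_sqrt ?sumr_ge0 // => [|k _]; last exact: sqr_ge0.
by rewrite (bigD1 i) //= lerDl sumr_ge0 // => k _; rewrite sqr_ge0.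
Qed.

Lemma spec_norm_has_ubound m (C : 'M[R]_m) :
  has_ubound [set vnorm (C *m x) | x in [set x : 'cV[R]_m | vnorm x <= 1]].
Proof.
exists (vnorm (\col_i \sum_k `|C i k|)) => _ [x /= x_le1 <-].
apply: vnorm_le => i; rewrite !mxE [X in _ <= X]ger0_norm ?sumr_ge0 //.
apply: le_trans (ler_norm_sum _ _ _) _; apply: ler_sum => k _.
rewrite normrM ler_piMr //; exact: le_trans (abs_entry_le_vnorm x k) x_le1.
Qed.

Lemma vnorm_mulmx_le m (C : 'M[R]_m) (x : 'cV[R]_m) :
  vnorm (C *m x) <= spec_norm C * vnorm x.
Proof.
have [x0|x_neq0] := eqVneq (vnorm x) 0.
  by move: (x0) => /vnorm_eq0 x_eq0; rewrite x_eq0 mulmx0 -x_eq0 x0 mulr0.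
have x_gt0 : 0 < vnorm x by rewrite lt0r x_neq0 vnorm_ge0.
set u := (vnorm x)^-1 *: x.
have u_le1 : vnorm u <= 1.
  by rewrite vnormZ ger0_norm ?invr_ge0 ?vnorm_ge0 // mulVf.
have Cu_le : vnorm (C *m u) <= spec_norm C.
  by apply: (ub_le_sup (spec_norm_has_ubound C)); exists u.
move: Cu_le; rewrite /u -scalemxAr vnormZ ger0_norm ?invr_ge0 ?vnorm_ge0 // mulrC.
by rewrite ler_pdivrMr.
Qed.

Lemma frob_norm2_cols m p (A : 'M[R]_(m, p)) :
  frob_norm2 A = \sum_j vnorm (col j A) ^+ 2.
Proof.
rewrite /frob_norm2 frob_innerE exchange_big; apply: eq_bigr => j _.
by rewrite vnorm_sqr; apply: eq_bigr => i _; rewrite !mxE expr2.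
Qed.

Lemma frob_norm2_mulmx_le m p (C : 'M[R]_m) (D : 'M[R]_(m, p)) :
  frob_norm2 (C *m D) <= spec_norm C ^+ 2 * frob_norm2 D.
Proof.
rewrite !frob_norm2_cols mulr_sumr; apply: ler_sum => j _.
rewrite -exprMn colE -mulmxA -colE lerXn2r ?nnegrE ?vnorm_ge0 ?vnorm_mulmx_le //.
exact: le_trans (vnorm_ge0 _) (vnorm_mulmx_le C _).
Qed.

End SpectralNorm.

Section ADMMBMDescent.
Variables (R : realType) (n r : nat) (C : 'M[R]_n) (rho : R).
Hypotheses (C_sym : C^T = C) (rho_neq0 : rho != 0).

Definition Lsmooth (t s y : 'M[R]_(n, r)) : R :=
  frob_inner C (t *m s^T) + frob_inner y (t - s) + rho / 2 * frob_norm2 (t - s).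

Lemma LrhoE t s y : inM t -> Lrho C rho t s y = (Lsmooth t s y)%:E.
Proof. by move=> t_inM; rewrite /Lrho asboolT // adde0. Qed.

Lemma Lsmooth_tsig_step t t' s y : frob_norm2 t = frob_norm2 t' ->
  Lsmooth t s y - Lsmooth t' s y = rho * frob_inner (gammaOf C rho s y) (t' - t).
Proof.
move=> eq_norm.
have Lsmooth_in_t u : Lsmooth u s y
    = frob_inner (C *m s + y) u + rho / 2 * frob_norm2 (u - s) - frob_inner y s.
  by rewrite /Lsmooth frob_inner_mul_trmx frob_innerDl frob_innerBr; field.
have rho_gamma : rho *: s - (C *m s + y) = rho *: gammaOf C rho s y.
  by rewrite /gammaOf scalerBr scalerA mulfV // scale1r (addrC y).
rewrite -frob_innerZl -rho_gamma -(quadratic_gap_equal_norms _ _ _ eq_norm).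
by rewrite !Lsmooth_in_t; field.
Qed.

Lemma Lsmooth_sig_step t s s' y : s' = t + rho^-1 *: (y - C *m t) ->
  Lsmooth t s y - Lsmooth t s' y = rho / 2 * frob_norm2 (s' - s).
Proof.
move=> def_s'.
have Lsmooth_in_s u : Lsmooth t u y
    = frob_inner (C *m t - y) u + rho / 2 * frob_norm2 (t - u) + frob_inner y t.
  rewrite /Lsmooth frob_inner_mul_trmx frob_inner_mulmxl C_sym frob_innerBl frob_innerBr.
  by rewrite (frob_innerC u); field.
have grad : C *m t - y = rho *: (t - s').
  by rewrite def_s' opprD addrA subrr add0r scalerN scalerA mulfV // scale1r opprB.
rewrite frob_norm2_subC -(quadratic_gap_at_minimizer s grad) !Lsmooth_in_s.
by field.
Qed.

Lemma Lsmooth_y_step t s y y' : y' = y + rho *: (t - s) ->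
  Lsmooth t s y - Lsmooth t s y' = - rho^-1 * frob_norm2 (y' - y).
Proof.
move=> ->; rewrite [y + _]addrC addrK frob_norm2Z /Lsmooth frob_innerDl frob_innerZl.
by rewrite /frob_norm2; field.
Qed.

Variable t0 : 'M[R]_(n, r).

Lemma tsigS k : tsig C rho t0 k.+1 = rownormalize (gam C rho t0 k).
Proof. by rewrite /tsig /gam /sig /yv /=; case: admm_iter => [[]]. Qed.

Lemma sigS k : sig C rho t0 k.+1
  = tsig C rho t0 k.+1 + rho^-1 *: (yv C rho t0 k - C *m tsig C rho t0 k.+1).
Proof. by rewrite /tsig /sig /yv /=; case: admm_iter => [[]]. Qed.

Lemma yvS k : yv C rho t0 k.+1
  = yv C rho t0 k + rho *: (tsig C rho t0 k.+1 - sig C rho t0 k.+1).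
Proof. by rewrite /tsig /sig /yv /=; case: admm_iter => [[]]. Qed.

Lemma yv_mulmx k : yv C rho t0 k = C *m tsig C rho t0 k.
Proof.
case: k => [//|k]; rewrite yvS sigS opprD addrA subrr sub0r scalerN scalerA.
by rewrite mulfV // scale1r opprB addrC subrK.
Qed.

Hypotheses (t0_inM : inM t0)
  (gam_neq0 : forall k i, rownorm (gam C rho t0 k) i != 0).

Lemma inM_tsig k : inM (tsig C rho t0 k).
Proof. by case: k => [//|k]; rewrite tsigS; apply: inM_rownormalize. Qed.

Lemma Lsmooth_iter_diff k :
  Lsmooth (tsig C rho t0 k) (sig C rho t0 k) (yv C rho t0 k)
  - Lsmooth (tsig C rho t0 k.+1) (sig C rho t0 k.+1) (yv C rho t0 k.+1)
  = rho * frob_inner (gam C rho t0 k) (tsig C rho t0 k.+1 - tsig C rho t0 k)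
    + rho / 2 * frob_norm2 (sig C rho t0 k.+1 - sig C rho t0 k)
    - rho^-1 * frob_norm2 (C *m (tsig C rho t0 k.+1 - tsig C rho t0 k)).
Proof.
set t := tsig C rho t0 k; set t' := tsig C rho t0 k.+1.
set s := sig C rho t0 k; set s' := sig C rho t0 k.+1.
set y := yv C rho t0 k; set y' := yv C rho t0 k.+1.
have -> : Lsmooth t s y - Lsmooth t' s' y'
    = (Lsmooth t s y - Lsmooth t' s y) + (Lsmooth t' s y - Lsmooth t' s' y)
      + (Lsmooth t' s' y - Lsmooth t' s' y') by ring.
rewrite Lsmooth_tsig_step; last by rewrite !frob_norm2_inM //; apply: inM_tsig.
rewrite Lsmooth_sig_step; last exact: sigS.
rewrite Lsmooth_y_step; last exact: yvS.
have -> : y' - y = C *m (t' - t) by rewrite /y' /y !yv_mulmx mulmxBr.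
by rewrite mulNr.
Qed.

End ADMMBMDescent.

Theorem lemma1 (R : realType) (n r : nat) (C : 'M[R]_n) (rho : R)
  (t0 : 'M[R]_(n, r)) :
  C^T = C -> 0 < rho -> inM t0 ->
  (forall (k : nat) (i : 'I_n), rownorm (gam C rho t0 k) i != 0) ->
  forall k : nat,
  (Lrho C rho (tsig C rho t0 k) (sig C rho t0 k) (yv C rho t0 k)
   - Lrho C rho (tsig C rho t0 k.+1) (sig C rho t0 k.+1) (yv C rho t0 k.+1)
   >= ((rho * min_rownorm (gam C rho t0 k) / 2 - spec_norm C ^+ 2 / rho)
        * frob_norm2 (tsig C rho t0 k.+1 - tsig C rho t0 k)
       + rho / 2 * frob_norm2 (sig C rho t0 k.+1 - sig C rho t0 k))%:E)%E.
Proof.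
move=> C_sym rho_gt0 t0_inM gam_neq0 k.
have rho_neq0 : rho != 0 by rewrite gt_eqF.
have tsig_inM := inM_tsig t0_inM gam_neq0.
rewrite !LrhoE // -EFinB lee_fin Lsmooth_iter_diff //.
set g := gam C rho t0 k; set D := tsig C rho t0 k.+1 - tsig C rho t0 k.
have inner_ge : min_rownorm g / 2 * frob_norm2 D <= frob_inner g D.
  rewrite /D tsigS; apply: frob_inner_rownormalize_ge => //.
  exact: min_rownorm_le.
have rho_inv_ge0 : 0 <= rho^-1 by rewrite invr_ge0 ltW.
have := ler_wpM2l (ltW rho_gt0) inner_ge.
have := ler_wpM2l rho_inv_ge0 (frob_norm2_mulmx_le C D).
lra.
Qed.
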